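(* Let $\mathcal{M}$ be any $R\times K$ matrix with entries in a finite set $V$, let $\hat v\subseteq V$, and let $1\le L\le U$ be integers such that every stretch of $\hat v$ in every row of $\mathcal{M}$ has length in $[L,U]$. Then for each $0\le k<K-U$, $$ls^+_k+\sum_{j=L}^{U}\#^{\hat v}_{k+j}-(U-L+1)R\le 0,$$ and for each $U\le k<K$, $$ls^-_k+\sum_{j=L}^{U}\#^{\hat v}_{k-j}-(U-L+1)R\le 0,$$ where $ls^+_k=\max(0,\#^{\hat v}_k-\#^{\hat v}_{k-1})$ and $ls^-_k=\max(0,\#^{\hat v}_k-\#^{\hat v}_{k+1})$.
   Context: Columns are indexed $0,\ldots,K-1$ and rows $0,\ldots,R-1$. For $\hat v\subseteq V$ and a column $k$, $\#^{\hat v}_k$ denotes the number of rows $r$ with $\mathcal{M}_{r,k}\in\hat v$, with the convention $\#^{\hat v}_{-1}=\#^{\hat v}_{K}=0$. A stretch of $\hat v$ in row $r$ is a maximal (with respect to inclusion) interval $[a,b]$ of column indices such that $\mathcal{M}_{r,j}\in\hat v$ for all $a\le j\le b$; its length is $b-a+1$. *)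

From HB Require Import structures.
From mathcomp Require Import all_boot all_order all_algebra.
Set Implicit Arguments. Unset Strict Implicit. Unset Printing Implicit Defensive.
Import Order.TTheory GRing.Theory Num.Theory.

Definition inv (V : finType) (R K : nat) (M : 'M[V]_(R, K)) (vh : {set V})
    (r : 'I_R) (j : nat) : bool :=
  if (insub j : option 'I_K) is Some j' then M r j' \in vh else false.

Definition inside (V : finType) (R K : nat) (M : 'M[V]_(R, K)) (vh : {set V})
    (r : 'I_R) (a b : nat) : Prop :=
  forall j, a <= j <= b -> inv M vh r j.

Definition is_stretch (V : finType) (R K : nat) (M : 'M[V]_(R, K))
    (vh : {set V}) (r : 'I_R) (a b : nat) : Prop :=
  a <= b /\ inside M vh r a b /\
  (forall a' b', a' <= a -> b <= b' -> inside M vh r a' b' -> a' = a /\ b' = b).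

(* #^{vh}_k, for an integer column index k; it is 0 outside 0..K-1
   (in particular #_{-1} = #_K = 0). *)
Definition cnt (V : finType) (R K : nat) (M : 'M[V]_(R, K)) (vh : {set V})
    (k : int) : int :=
  match k with
  | Posz n => (#|[set r : 'I_R | inv M vh r n]|)%:Z
  | Negz _ => 0
  end.

Definition lsp (V : finType) (R K : nat) (M : 'M[V]_(R, K)) (vh : {set V})
    (k : nat) : int :=
  (Num.max 0 (cnt M vh k%:Z - cnt M vh (k%:Z - 1)))%R.

Definition lsm (V : finType) (R K : nat) (M : 'M[V]_(R, K)) (vh : {set V})
    (k : nat) : int :=
  (Num.max 0 (cnt M vh k%:Z - cnt M vh (k%:Z + 1)))%R.

From Pilot Require Import Defs.
From HB Require Import structures.
From mathcomp Require Import all_boot all_order all_algebra.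
From mathcomp Require Import zify.
Import Order.TTheory GRing.Theory Num.Theory.

(* Fix a column k and a row r.  Say that row r "rises" at k if
   M_{r,k} is in vh but M_{r,k-1} is not (the left border counts as "not").
   Such a k starts a stretch [k,b]; its length b-k+1 lies in [L,U], so the
   entry at column k+(b-k+1), inside the window k+L..k+U, is not in vh.
   Hence, per row, [rises at k] + #{L <= j <= U | M_{r,k+j} in vh} <= U-L+1.
   Summing over rows, and using ls^+_k <= #{rows rising at k}, gives the
   first inequality.  The second is the mirror image: a row "falls" at k
   when M_{r,k} is in vh but M_{r,k+1} is not; the stretch [a,k] ending
   there has length <= U <= k, so a >= 1 and column a-1 = k-(k-a+1) lies in
   the window k-U..k-L and is not in vh. *)

Section RowStretches.
Variables (V : finType) (R K : nat) (M : 'M[V]_(R, K)) (vh : {set V}) (r : 'I_R).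
Local Notation inv := (Defs.inv M vh r).

Lemma inv_out j : (K <= j)%N -> inv j = false.
Proof. by move=> hj; rewrite /Defs.inv insubN // -leqNgt. Qed.

Definition left_bounded (a : nat) : Prop := forall a', a = a'.+1 -> ~~ inv a'.

Lemma stretch_of_bounds a b : (a <= b)%N -> inside M vh r a b ->
  left_bounded a -> ~~ inv b.+1 -> is_stretch M vh r a b.
Proof.
move=> ab hab ha hb; split=> //; split=> // a' b' a'a bb' hin.
have [a'_lt|a_le] := ltnP a' a.
  case: a ab hab ha a'a a'_lt => [//|a] ab _ ha _ a'_lt.
  by move: (ha a erefl); rewrite hin //; lia.
have [b_lt|b'_le] := ltnP b b'; first by move: hb; rewrite hin //; lia.
split; lia.
Qed.

Lemma run_right k : inv k -> exists2 b, (k <= b)%N & inside M vh r k b /\ ~~ inv b.+1.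
Proof.
suff run : forall d k, (K <= k + d)%N -> inv k ->
    exists2 b, (k <= b)%N & inside M vh r k b /\ ~~ inv b.+1.
  by apply: (run K); rewrite leq_addl.
elim=> [|d IH] n hK hn; first by rewrite addn0 in hK; rewrite inv_out in hn.
case hn1: (inv n.+1); last first.
  by exists n => //; split=> [j hj|]; [have -> : j = n by lia | rewrite hn1].
have [b nb [hin hb]] := IH n.+1 ltac:(lia) hn1.
exists b; first lia; split => // j hj.
by have [nj|jn] := ltnP n j; [apply: hin; lia | have -> : j = n by lia].
Qed.

Lemma run_left k : inv k -> exists2 a, (a <= k)%N & inside M vh r a k /\ left_bounded a.
Proof.
elim: k => [|k IH] hk.
  by exists 0 => //; split => [j hj|a' //]; have -> : j = 0 by lia.
case hk0: (inv k).
  have [a ak [hin ha]] := IH hk0; exists a; first lia; split => // j hj.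
  by have [jk|kj] := leqP j k; [apply: hin; lia | have -> : j = k.+1 by lia].
exists k.+1 => //; split => [j hj|a' [<-]]; last by rewrite hk0.
by have -> : j = k.+1 by lia.
Qed.

Variables (L U : nat).
Hypothesis stretch_len : forall a b, is_stretch M vh r a b -> (L <= b - a + 1 <= U)%N.

Lemma gap_after_start k : inv k -> left_bounded k ->
  exists2 j, (L <= j <= U)%N & ~~ inv (k + j).
Proof.
move=> hk hstart; have [b kb [hin hb]] := run_right k hk.
have len := stretch_len k b (stretch_of_bounds k b kb hin hstart hb).
by exists (b - k + 1) => //; have -> : (k + (b - k + 1) = b.+1)%N by lia.
Qed.

Lemma gap_before_end k : inv k -> ~~ inv k.+1 -> (U <= k)%N ->
  exists2 j, (L <= j <= U)%N & ~~ inv (k - j).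
Proof.
move=> hk hend hUk; have [a ak [hin ha]] := run_left k hk.
have len := stretch_len a k (stretch_of_bounds a k ak hin ha hend).
case: a ak hin ha len => [|a] ak hin ha len; first lia.
exists (k - a); first lia.
have -> : (k - (k - a) = a)%N by lia.
exact: ha.
Qed.

End RowStretches.

Lemma window_row_bound (h : nat -> bool) (s : bool) (L U : nat) :
  (s -> exists2 j, (L <= j <= U)%N & ~~ h j) ->
  (s + \sum_(L <= j < U.+1) h j <= U.+1 - L)%N.
Proof.
move=> hs.
have total : (\sum_(L <= j < U.+1) h j + \sum_(L <= j < U.+1) ~~ h j = U.+1 - L)%N.
  rewrite -big_split /= -[RHS]muln1 -sum_nat_const_nat.
  by apply: eq_bigr => j _; case: (h j).
case: s hs => [/(_ isT) [j hj nhj]|_]; last by rewrite add0n -total leq_addr.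
have : (0 < \sum_(L <= j < U.+1) ~~ h j)%N.
  rewrite lt0n sum_nat_seq_neq0; apply/hasP; exists j; last by rewrite nhj.
  by rewrite mem_index_iota; lia.
lia.
Qed.

(* The positive part of the rise of the count
   sum_i p i over sum_i q i is at most the number of rows i with p i but not
   q i; if each such row, together with its ones in the window, stays within
   W, the inequality of the theorem follows. *)
Lemma rise_window_bound (I : finType) (p q : I -> bool) (g : nat -> I -> bool)
    (L U W : nat) :
  (forall i, ((p i && ~~ q i) + \sum_(L <= j < U.+1) g j i <= W)%N) ->
  (Num.max 0 ((\sum_i (p i : nat))%N%:Z - (\sum_i (q i : nat))%N%:Z)
     + \sum_(L <= j < U.+1) (\sum_i (g j i : nat))%N%:Z - (W * #|I|)%N%:Z <= 0)%R.
Proof.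
move=> row.
have rise : (\sum_i (p i : nat) <= \sum_i (q i : nat) + \sum_i (p i && ~~ q i : nat))%N.
  by rewrite -big_split /=; apply: leq_sum => i _; case: (p i); case: (q i).
have window : (\sum_i (p i && ~~ q i : nat)
                + \sum_(L <= j < U.+1) \sum_i (g j i : nat) <= W * #|I|)%N.
  rewrite exchange_big /= -big_split /= mulnC -sum_nat_const.
  by apply: leq_sum => i _; exact: row.
rewrite -(big_morph Posz PoszD (erefl (0%:Z)%R)); lia.
Qed.

Lemma cnt_col (V : finType) (R K : nat) (M : 'M[V]_(R, K)) (vh : {set V}) (n : nat) :
  (cnt M vh n%:Z = (\sum_r (Defs.inv M vh r n : nat))%N%:Z)%R.
Proof.
rewrite /= -sum1dep_card big_mkcond /=.
by congr Posz; apply: eq_bigr => r _; case: (Defs.inv M vh r n).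
Qed.

Lemma cnt_pred (V : finType) (R K : nat) (M : 'M[V]_(R, K)) (vh : {set V}) (k : nat) :
  (cnt M vh (k%:Z - 1) = (\sum_r ((0 < k)%N && Defs.inv M vh r k.-1 : nat))%N%:Z)%R.
Proof.
case: k => [|k]; first by rewrite big1.
have -> : (k.+1%:Z - 1 = k%:Z)%R by rewrite -addn1 PoszD addrK.
exact: cnt_col.
Qed.

Theorem mainTheorem14 (V : finType) (R K : nat) (M : 'M[V]_(R, K))
    (vh : {set V}) (L U : nat) :
  (1 <= L)%N -> (L <= U)%N ->
  (forall (r : 'I_R) (a b : nat), is_stretch M vh r a b ->
      (L <= b - a + 1 <= U)%N) ->
  (forall k : nat, (k + U < K)%N ->
      (lsp M vh k + \sum_(L <= j < U.+1) cnt M vh (k + j)%N%:Z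
         - ((U - L + 1) * R)%N%:Z <= 0)%R) /\
  (forall k : nat, (U <= k < K)%N ->
      (lsm M vh k + \sum_(L <= j < U.+1) cnt M vh (k - j)%N%:Z
         - ((U - L + 1) * R)%N%:Z <= 0)%R).
Proof.
move=> _ LU HS; rewrite -[in (_ * R)%N](card_ord R).
split => k hk; under eq_bigr do rewrite cnt_col.
- rewrite /lsp cnt_pred cnt_col; apply: rise_window_bound => r.
  apply: leq_trans (_ : _ <= U.+1 - L)%N _; last lia.
  apply: window_row_bound => /andP[hk0 hprev].
  apply: gap_after_start (HS r) _ hk0 _ => k' ek.
  by move: hprev; rewrite ek.
- rewrite /lsm -[(k%:Z + 1)%R]PoszD addn1 !cnt_col; apply: rise_window_bound => r.
  apply: leq_trans (_ : _ <= U.+1 - L)%N _; last lia.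
  apply: window_row_bound => /andP[hk0 hnext].
  by apply: gap_before_end (HS r) _ hk0 hnext _; case/andP: hk.
Qed.
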